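(* Let $L$ be a finite-dimensional Lie superalgebra over a field of characteristic different from $2,3$, let $0\to R\to F\xrightarrow{\pi} L\to 0$ be a free presentation of $L$, and let $(T,\lambda)$ be a universal element of $C(L)$. Then $T$ is isoclinic to $F/[F,R]$.
   Context: Lie superalgebras: $\mathbb{Z}_2$-graded algebras with graded skew-symmetric bracket satisfying the graded Jacobi identity; homomorphisms are even. A free presentation of $L$ is a free Lie superalgebra $F$ on a $\mathbb{Z}_2$-graded set together with a surjective homomorphism $\pi:F\to L$, with $R=\mathrm{Ker}(\pi)$. $C(L)$ is the class of pairs $(K,\lambda)$ with $\lambda:K\to L$ a surjective homomorphism and $\mathrm{Ker}(\lambda)\subseteq [K,K]\cap Z(K)$; $(T,\sigma)\in C(L)$ is universal if for every $(K,\lambda)\in C(L)$ there is a homomorphism $\tau:T\to K$ with $\lambda\circ\tau=\sigma$. Two Lie superalgebras $A,B$ are isoclinic if there are isomorphisms $\varphi:A/Z(A)\to B/Z(B)$, $\theta:A'\to B'$ ($A'=[A,A]$) with $\theta([a,b])=[c,d]$ whenever $c+Z(B)=\varphi(a+Z(A))$ and $d+Z(B)=\varphi(b+Z(A))$. *)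

From HB Require Import structures.
From mathcomp Require Import all_boot all_order all_algebra.
Set Implicit Arguments. Unset Strict Implicit. Unset Printing Implicit Defensive.
Import GRing.Theory.
Local Open Scope ring_scope.

(* Koszul sign (-1)^(a b) for parities a, b (false = even, true = odd). *)
Definition ksgn (K : fieldType) (a b : bool) : K := (-1) ^+ (a && b).

Record lieSuperAlg (K : fieldType) := LieSuperAlg {
  lsa_carrier :> lmodType K;
  lsa_par : bool -> lsa_carrier -> Prop;
  lsa_bracket : lsa_carrier -> lsa_carrier -> lsa_carrier;
  lsa_par0 : forall b, lsa_par b 0;
  lsa_parD : forall b x y, lsa_par b x -> lsa_par b y -> lsa_par b (x + y);
  lsa_parZ : forall b (c : K) x, lsa_par b x -> lsa_par b (c *: x);
  lsa_decomp : forall x, exists x0 x1,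
      lsa_par false x0 /\ lsa_par true x1 /\ x = x0 + x1;
  lsa_direct : forall x, lsa_par false x -> lsa_par true x -> x = 0;
  lsa_linl : forall (c : K) x y z,
      lsa_bracket (c *: x + y) z = c *: lsa_bracket x z + lsa_bracket y z;
  lsa_linr : forall (c : K) x y z,
      lsa_bracket z (c *: x + y) = c *: lsa_bracket z x + lsa_bracket z y;
  lsa_par_bracket : forall a b x y, lsa_par a x -> lsa_par b y ->
      lsa_par (addb a b) (lsa_bracket x y);
  lsa_skew : forall a b x y, lsa_par a x -> lsa_par b y ->
      lsa_bracket x y = - (ksgn K a b *: lsa_bracket y x);
  lsa_jacobi : forall a b c x y z, lsa_par a x -> lsa_par b y -> lsa_par c z ->
      ksgn K a c *: lsa_bracket x (lsa_bracket y z)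
    + ksgn K b a *: lsa_bracket y (lsa_bracket z x)
    + ksgn K c b *: lsa_bracket z (lsa_bracket x y) = 0
}.

Section Defs.
Variable K : fieldType.

Definition lsa_hom (A B : lieSuperAlg K) (f : A -> B) : Prop :=
  (forall (c : K) x y, f (c *: x + y) = c *: f x + f y) /\
  (forall x y, f (lsa_bracket x y) = lsa_bracket (f x) (f y)) /\
  (forall b x, lsa_par b x -> lsa_par b (f x)).

Definition lsa_iso (A B : lieSuperAlg K) (f : A -> B) : Prop :=
  lsa_hom f /\ bijective f.

Definition lsa_span (A : lieSuperAlg K) (S : A -> Prop) (x : A) : Prop :=
  exists n (v : 'I_n -> A) (c : 'I_n -> K),
    (forall i, S (v i)) /\ x = \sum_(i < n) c i *: v i.

Definition comm_span (A : lieSuperAlg K) (I J : A -> Prop) : A -> Prop :=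
  lsa_span (fun x => exists a b, I a /\ J b /\ x = lsa_bracket a b).

Definition derived (A : lieSuperAlg K) : A -> Prop :=
  comm_span (fun _ => True) (fun _ => True).

Definition center (A : lieSuperAlg K) (z : A) : Prop :=
  forall x, lsa_bracket z x = 0.

Definition lsa_findim (A : lieSuperAlg K) : Prop :=
  exists n (v : 'I_n -> A), forall x, lsa_span (fun y => exists i, y = v i) x.

Definition lsa_free (F : lieSuperAlg K) (X : Type) (deg : X -> bool)
    (iota : X -> F) : Prop :=
  (forall x, lsa_par (deg x) (iota x)) /\
  forall (M : lieSuperAlg K) (f : X -> M),
    (forall x, lsa_par (deg x) (f x)) ->
    exists g : F -> M, lsa_hom g /\ (forall x, g (iota x) = f x) /\
      forall h : F -> M, lsa_hom h -> (forall x, h (iota x) = f x) ->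
        forall y, h y = g y.

Definition lsa_quotient (A : lieSuperAlg K) (I : A -> Prop)
    (Q : lieSuperAlg K) (q : A -> Q) : Prop :=
  lsa_hom q /\ (forall y, exists x, q x = y) /\ (forall x, q x = 0 <-> I x).

Definition inCL (L Kt : lieSuperAlg K) (lam : Kt -> L) : Prop :=
  lsa_hom lam /\ (forall y, exists x, lam x = y) /\
  (forall x, lam x = 0 -> derived x /\ center x).

Definition universal_CL (L T : lieSuperAlg K) (sigma : T -> L) : Prop :=
  inCL sigma /\
  forall (Kt : lieSuperAlg K) (lam : Kt -> L), inCL lam ->
    exists tau : T -> Kt, lsa_hom tau /\ forall x, lam (tau x) = sigma x.

Definition derived_iso (A B : lieSuperAlg K) (theta : A -> B) : Prop :=
  (forall (c : K) x y, derived x -> derived y ->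
      theta (c *: x + y) = c *: theta x + theta y) /\
  (forall x y, derived x -> derived y ->
      theta (lsa_bracket x y) = lsa_bracket (theta x) (theta y)) /\
  (forall b x, derived x -> lsa_par b x -> lsa_par b (theta x)) /\
  (forall x, derived x -> derived (theta x)) /\
  (forall x y, derived x -> derived y -> theta x = theta y -> x = y) /\
  (forall y, derived y -> exists x, derived x /\ theta x = y).

(* isoclinism; A/Z(A), B/Z(B) are realized by quotient maps qA, qB *)
Definition isoclinic (A B : lieSuperAlg K) : Prop :=
  exists (QA : lieSuperAlg K) (qA : A -> QA) (QB : lieSuperAlg K) (qB : B -> QB)
         (phi : QA -> QB) (theta : A -> B),
    lsa_quotient (@center A) qA /\ lsa_quotient (@center B) qB /\
    lsa_iso phi /\ derived_iso theta /\
    forall a b c d, qB c = phi (qA a) -> qB d = phi (qA b) ->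
      theta (lsa_bracket a b) = lsa_bracket c d.

End Defs.

(* Lift [pi] along the surjection [lam] to [b : F -> T], using that [F] is free.
   Since [ker lam] is central, [b] kills [[F, R]] and induces [beta : Q -> T] with
   [lam \o beta = mu], where [mu : Q -> L] is induced by [pi] and has central kernel
   [R/[F, R]]; moreover [T = beta(Q) + Z(T)].  Such a homomorphism is an isoclinism
   as soon as it is injective on [Q'].  For that, choose homogeneous [e_j] in [Q]
   whose images form a basis of [L] modulo [L'] (this is where finite dimension is
   used): [S = Q' + span(e_j)] is a subalgebra with [(S, mu|S)] in [C(L)], so
   universality yields [tau : T -> S] over [L], and [tau \o beta] agrees with the
   identity of [Q] modulo [ker mu], hence on [Q']. *)

From HB Require Import structures.
From mathcomp Require Import all_boot all_order all_algebra.
From mathcomp Require Import boolp.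
Set Implicit Arguments. Unset Strict Implicit. Unset Printing Implicit Defensive.
Import GRing.Theory.
Local Open Scope ring_scope.

Section Brackets.
Variables (K : fieldType) (A : lieSuperAlg K).
Implicit Types (x y z : A) (b : bool).
Local Notation "[ x , y ]" := (lsa_bracket x y).
Local Notation par := (@lsa_par K A).

Lemma bracketDl x y z : [x + y, z] = [x, z] + [y, z].
Proof. by have := lsa_linl 1 x y z; rewrite !scale1r. Qed.

Lemma bracketDr x y z : [z, x + y] = [z, x] + [z, y].
Proof. by have := lsa_linr 1 x y z; rewrite !scale1r. Qed.

Lemma bracket0l z : [0, z] = 0.
Proof. by apply: (addrI [0, z]); rewrite -bracketDl !addr0. Qed.

Lemma bracketZl c x z : [c *: x, z] = c *: [x, z].
Proof. by rewrite -[c *: x]addr0 lsa_linl bracket0l addr0. Qed.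

Lemma bracketBl x y z : [x - y, z] = [x, z] - [y, z].
Proof. by rewrite -scaleN1r bracketDl bracketZl scaleN1r. Qed.

Lemma lsa_parN b x : par b x -> par b (- x).
Proof. by rewrite -scaleN1r; apply: lsa_parZ. Qed.

Lemma lsa_par_sum b n (v : 'I_n -> A) :
  (forall i, par b (v i)) -> par b (\sum_(i < n) v i).
Proof.
move=> hv; elim/big_ind: _ => //; [exact: lsa_par0 | exact: lsa_parD].
Qed.

Lemma lsa_par_both_eq0 b x : par b x -> par (~~ b) x -> x = 0.
Proof. by case: b => /= h1 h2; apply: lsa_direct. Qed.

Lemma lsa_par_add_eq0 b x y : par b x -> par (~~ b) y -> x + y = 0 -> x = 0 /\ y = 0.
Proof.
move=> hx hy /eqP; rewrite addr_eq0 => /eqP ex.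
have x0 : x = 0 by apply: (lsa_par_both_eq0 hx); rewrite ex; apply: lsa_parN.
by split => //; rewrite -[y]opprK -ex x0 oppr0.
Qed.

Lemma lsa_decomp_uniq x0 x1 y0 y1 : par false x0 -> par true x1 ->
  par false y0 -> par true y1 -> x0 + x1 = y0 + y1 -> x0 = y0 /\ x1 = y1.
Proof.
move=> hx0 hx1 hy0 hy1 e.
have hB b u v : par b u -> par b v -> par b (u - v).
  by move=> *; apply: lsa_parD => //; apply: lsa_parN.
have /(lsa_par_add_eq0 (hB _ _ _ hx0 hy0) (hB _ _ _ hx1 hy1)) [/eqP + /eqP] :
  (x0 - y0) + (x1 - y1) = 0 by rewrite addrACA e -opprD subrr.
by rewrite !subr_eq0 => /eqP -> /eqP ->.
Qed.

Lemma lsa_homog_ind (Pr : A -> Prop) :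
  (forall x y, Pr x -> Pr y -> Pr (x + y)) -> (forall b x, par b x -> Pr x) ->
  forall x, Pr x.
Proof.
move=> PrD Prh x; have [x0 [x1 [h0 [h1 ->]]]] := lsa_decomp x.
by apply: PrD; [apply: (Prh false) | apply: (Prh true)].
Qed.

Lemma bracket_skew_eq0 a b x y : par a x -> par b y -> [x, y] = 0 -> [y, x] = 0.
Proof. by move=> hx hy e; rewrite (lsa_skew hy hx) e scaler0 oppr0. Qed.

Lemma bracket_split_eq0 a x0 x1 y : par false x0 -> par true x1 -> par a y ->
  [x0, y] + [x1, y] = 0 -> [x0, y] = 0 /\ [x1, y] = 0.
Proof.
move=> h0 h1 hy; apply: lsa_par_add_eq0 (lsa_par_bracket h0 hy) _.
exact: lsa_par_bracket h1 hy.
Qed.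

Lemma bracket_split_eq0r a x0 x1 y : par false x0 -> par true x1 -> par a y ->
  [y, x0] + [y, x1] = 0 -> [y, x0] = 0 /\ [y, x1] = 0.
Proof.
move=> h0 h1 hy; apply: lsa_par_add_eq0 (lsa_par_bracket hy h0) _.
by rewrite addbF -addbT; apply: lsa_par_bracket hy h1.
Qed.

Lemma centerP z : center z <-> forall x, [x, z] = 0.
Proof.
have [z0 [z1 [h0 [h1 ->]]]] := lsa_decomp z; split => hz.
  apply: lsa_homog_ind => [x y ex ey | a x hx]; first by rewrite bracketDl ex ey addr0.
  have := hz x; rewrite bracketDl => /(bracket_split_eq0 h0 h1 hx) [e0 e1].
  by rewrite bracketDr (bracket_skew_eq0 h0 hx e0) (bracket_skew_eq0 h1 hx e1) addr0.
apply: lsa_homog_ind => [x y ex ey | a x hx]; first by rewrite bracketDr ex ey addr0.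
have := hz x; rewrite bracketDr => /(bracket_split_eq0r h0 h1 hx) [e0 e1].
by rewrite bracketDl (bracket_skew_eq0 hx h0 e0) (bracket_skew_eq0 hx h1 e1) addr0.
Qed.

Lemma center0 : center (0 : A).
Proof. by move=> x; apply: bracket0l. Qed.

Lemma center_subC x y : center (x - y) -> center (y - x).
Proof. by move=> h z; rewrite -opprB -scaleN1r bracketZl h scaler0. Qed.

Lemma bracket_center_eq x x' y y' :
  center (x - x') -> center (y - y') -> [x, y] = [x', y'].
Proof.
rewrite -{2}(subrK x' x) -{2}(subrK y' y).
move: (x - x') (y - y') => u v zu /centerP zv.
by rewrite bracketDl !bracketDr !zu !zv !add0r.
Qed.

End Brackets.

Section Spans.
Variables (K : fieldType) (A : lieSuperAlg K) (S : A -> Prop).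
Implicit Types (x y : A).

Lemma lsa_span_ind (Pr : A -> Prop) : Pr 0 -> (forall x, S x -> Pr x) ->
  (forall c x y, Pr x -> Pr y -> Pr (c *: x + y)) -> forall x, lsa_span S x -> Pr x.
Proof.
move=> Pr0 PrS PrL x [n [v [c [Sv ->]]]].
elim: n v c Sv => [|n IHn] v c Sv; first by rewrite big_ord0.
rewrite big_ord_recr /= addrC; apply: PrL; first exact: PrS.
exact: IHn (fun i => v (widen_ord (leqnSn n) i)) _ (fun i => Sv _).
Qed.

Lemma lsa_span_mem x : S x -> lsa_span S x.
Proof.
by exists 1%N, (fun _ => x), (fun _ => 1); split => //; rewrite big_ord1 scale1r.
Qed.

Lemma lsa_span0 : lsa_span S 0.
Proof. by exists 0%N, (fun _ => 0), (fun _ => 0); split; [case | rewrite big_ord0]. Qed.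

Lemma lsa_spanL c x y : lsa_span S x -> lsa_span S y -> lsa_span S (c *: x + y).
Proof.
move=> [n [v [a [Sv ->]]]] [m [w [b [Sw ->]]]].
exists (n + m)%N, (fun k => match split k with inl i => v i | inr j => w j end).
exists (fun k => match split k with inl i => c * a i | inr j => b j end).
split=> [k | ]; first by case: (split k).
rewrite big_split_ord scaler_sumr; congr (_ + _); apply: eq_bigr => i _.
  by rewrite (unsplitK (inl i)) scalerA.
by rewrite (unsplitK (inr i)).
Qed.

Lemma lsa_spanD x y : lsa_span S x -> lsa_span S y -> lsa_span S (x + y).
Proof. by move=> Sx Sy; have := lsa_spanL 1 Sx Sy; rewrite scale1r. Qed.

Lemma lsa_spanZ c x : lsa_span S x -> lsa_span S (c *: x).
Proof. by move=> Sx; have := lsa_spanL c Sx lsa_span0; rewrite addr0. Qed.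

Lemma lsa_spanB x y : lsa_span S x -> lsa_span S y -> lsa_span S (x - y).
Proof. by move=> Sx Sy; rewrite -scaleN1r addrC; apply: lsa_spanL. Qed.

End Spans.

Lemma lsa_span_range (K : fieldType) (A : lieSuperAlg K) n (w : 'I_n -> A) x :
  lsa_span (fun y => exists i, y = w i) x -> exists c : 'I_n -> K, x = \sum_(i < n) c i *: w i.
Proof.
move: x; apply: lsa_span_ind => [|_ [i ->]|a _ _ [c1 ->] [c2 ->]].
- by exists (fun _ => 0); rewrite big1 // => i _; rewrite scale0r.
- exists (fun k => (k == i)%:R); rewrite (bigD1 i) //= eqxx scale1r big1 ?addr0 //.
  by move=> k /negPf ->; rewrite scale0r.
- exists (fun k => a * c1 k + c2 k); rewrite scaler_sumr -big_split /=.
  by apply: eq_bigr => k _; rewrite scalerDl scalerA.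
Qed.

Section Derived.
Variables (K : fieldType) (A : lieSuperAlg K).
Implicit Types (x y : A).
Local Notation "[ x , y ]" := (lsa_bracket x y).
Local Notation par := (@lsa_par K A).

Lemma derived_bracket x y : derived [x, y].
Proof. by apply: lsa_span_mem; exists x, y. Qed.

Lemma derived_ind (Pr : A -> Prop) : Pr 0 -> (forall x y, Pr [x, y]) ->
  (forall c x y, Pr x -> Pr y -> Pr (c *: x + y)) -> forall x, derived x -> Pr x.
Proof. by move=> Pr0 Prb PrL; apply: lsa_span_ind => // _ [x [y [_ [_ ->]]]]. Qed.

Lemma derived_decomp x : derived x -> exists x0 x1,
  [/\ derived x0, derived x1, par false x0, par true x1 & x = x0 + x1].
Proof.
move: x; apply: derived_ind => [|x y|c x y].
- by exists 0, 0; rewrite addr0; split; rewrite //; (apply: lsa_span0 || apply: lsa_par0).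
- have [x0 [x1 [hx0 [hx1 ->]]]] := lsa_decomp x.
  have [y0 [y1 [hy0 [hy1 ->]]]] := lsa_decomp y.
  exists ([x0, y0] + [x1, y1]), ([x0, y1] + [x1, y0]); split;
    try by apply: lsa_spanD; apply: derived_bracket.
  + by apply: lsa_parD; [apply: (lsa_par_bracket hx0 hy0) | apply: (lsa_par_bracket hx1 hy1)].
  + by apply: lsa_parD; [apply: (lsa_par_bracket hx0 hy1) | apply: (lsa_par_bracket hx1 hy0)].
  + by rewrite !bracketDl !bracketDr [[x1, y0] + _]addrC addrACA.
- move=> [x0 [x1 [dx0 dx1 hx0 hx1 ->]]] [y0 [y1 [dy0 dy1 hy0 hy1 ->]]].
  exists (c *: x0 + y0), (c *: x1 + y1); split; try exact: lsa_spanL.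
  + by apply: lsa_parD => //; apply: lsa_parZ.
  + by apply: lsa_parD => //; apply: lsa_parZ.
  + by rewrite scalerDr addrACA.
Qed.

End Derived.

Section Homomorphisms.
Variables (K : fieldType) (A B : lieSuperAlg K) (g : A -> B).
Hypothesis hg : lsa_hom g.
Implicit Types (x y : A).

Lemma lsa_homL c x y : g (c *: x + y) = c *: g x + g y.
Proof. exact: hg.1. Qed.

Lemma lsa_hom_bracket x y : g (lsa_bracket x y) = lsa_bracket (g x) (g y).
Proof. exact: hg.2.1. Qed.

Lemma lsa_hom_par b x : lsa_par b x -> lsa_par b (g x).
Proof. exact: hg.2.2. Qed.

Lemma lsa_homD x y : g (x + y) = g x + g y.
Proof. by rewrite -[x]scale1r lsa_homL !scale1r. Qed.

Lemma lsa_hom0 : g 0 = 0.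
Proof. by apply: (addrI (g 0)); rewrite -lsa_homD !addr0. Qed.

Lemma lsa_homB x y : g (x - y) = g x - g y.
Proof. by rewrite -scaleN1r addrC lsa_homL addrC scaleN1r. Qed.

Lemma lsa_hom_sum n (c : 'I_n -> K) (v : 'I_n -> A) :
  g (\sum_(i < n) c i *: v i) = \sum_(i < n) c i *: g (v i).
Proof.
elim/big_rec2: _ => [|i x y _ <-]; first exact: lsa_hom0.
by rewrite lsa_homL.
Qed.

Lemma lsa_hom_derived x : derived x -> derived (g x).
Proof.
move: x; apply: derived_ind => [|x y|c x y dx dy].
- by rewrite lsa_hom0; apply: lsa_span0.
- by rewrite lsa_hom_bracket; apply: derived_bracket.
- by rewrite lsa_homL; apply: lsa_spanL.
Qed.

Section Surjective.
Hypothesis g_surj : forall u : B, exists x, g x = u.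

Lemma lsa_hom_par_lift b (u : B) : lsa_par b u -> exists x, lsa_par b x /\ g x = u.
Proof.
have [x <-] := g_surj u; have [x0 [x1 [h0 [h1 ->]]]] := lsa_decomp x.
rewrite lsa_homD => hb; have [gx0 gx1] := (lsa_hom_par h0, lsa_hom_par h1).
case: b hb => hb.
  have [e0 _] := lsa_decomp_uniq gx0 gx1 (lsa_par0 _ _) hb (esym (add0r _)).
  by exists x1; rewrite e0 add0r.
have [_ e1] := lsa_decomp_uniq gx0 gx1 hb (lsa_par0 _ _) (esym (addr0 _)).
by exists x0; rewrite e1 addr0.
Qed.

Lemma lsa_hom_derived_lift (u : B) : derived u -> exists x, derived x /\ g x = u.
Proof.
move: u; apply: derived_ind => [|u1 u2|c u1 u2 [x1 [d1 <-]] [x2 [d2 <-]]].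
- by exists 0; split; [apply: lsa_span0 | apply: lsa_hom0].
- have [[x1 <-] [x2 <-]] := (g_surj u1, g_surj u2).
  by exists (lsa_bracket x1 x2); rewrite lsa_hom_bracket; split; first exact: derived_bracket.
- by exists (c *: x1 + x2); rewrite lsa_homL; split; first exact: lsa_spanL.
Qed.

End Surjective.

End Homomorphisms.

Lemma lsa_hom_id (K : fieldType) (A : lieSuperAlg K) : lsa_hom (@id A).
Proof. by []. Qed.

Lemma lsa_hom_comp (K : fieldType) (A B C : lieSuperAlg K) (g : A -> B) (h : B -> C) :
  lsa_hom g -> lsa_hom h -> lsa_hom (h \o g).
Proof.
move=> hg hh; split=> [c x y | ]; first by rewrite /= !lsa_homL.
split=> [x y | b x hx]; first by rewrite /= !lsa_hom_bracket.
exact/(lsa_hom_par hh)/(lsa_hom_par hg).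
Qed.

Section Lifting.
Variable K : fieldType.

Lemma lsa_hom_eq_on_derived (A B : lieSuperAlg K) (h1 h2 : A -> B) :
  lsa_hom h1 -> lsa_hom h2 -> (forall x, center (h1 x - h2 x)) ->
  forall x, derived x -> h1 x = h2 x.
Proof.
move=> hh1 hh2 z; apply: derived_ind => [|x y|c x y e1 e2].
- by rewrite !lsa_hom0.
- by rewrite !lsa_hom_bracket //; apply: bracket_center_eq.
- by rewrite !lsa_homL // e1 e2.
Qed.

Lemma lsa_free_hom_unique (F : lieSuperAlg K) (X : Type) (deg : X -> bool)
    (iota : X -> F) (M : lieSuperAlg K) (h1 h2 : F -> M) :
  lsa_free deg iota -> lsa_hom h1 -> lsa_hom h2 ->
  (forall x, h1 (iota x) = h2 (iota x)) -> h1 =1 h2.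
Proof.
move=> [iota_par univ] hh1 hh2 e y.
have [g [_ [_ g_uniq]]] := univ M (h1 \o iota) (fun x => lsa_hom_par hh1 (iota_par x)).
by rewrite (g_uniq h1 hh1 (fun x => erefl)) (g_uniq h2 hh2 (fun x => esym (e x))).
Qed.

Lemma lsa_free_lift (F : lieSuperAlg K) (X : Type) (deg : X -> bool) (iota : X -> F)
    (L T : lieSuperAlg K) (pi : F -> L) (lam : T -> L) :
  lsa_free deg iota -> lsa_hom pi -> lsa_hom lam -> (forall l, exists t, lam t = l) ->
  exists b : F -> T, lsa_hom b /\ forall x, lam (b x) = pi x.
Proof.
move=> hF hpi hlam lam_surj.
have /choice [f0 f0P] x : exists t, lsa_par (deg x) t /\ lam t = pi (iota x).
  exact: (lsa_hom_par_lift hlam lam_surj (lsa_hom_par hpi (hF.1 x))).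
have [b [hb [b_iota _]]] := hF.2 T f0 (fun x => (f0P x).1).
exists b; split=> //; apply: (lsa_free_hom_unique hF (lsa_hom_comp hb hlam) hpi) => x.
by rewrite /= b_iota (f0P x).2.
Qed.

Lemma lsa_quotient_factor (A Q B : lieSuperAlg K) (I : A -> Prop) (q : A -> Q) (g : A -> B) :
  lsa_quotient I q -> lsa_hom g -> (forall x, I x -> g x = 0) ->
  exists h : Q -> B, lsa_hom h /\ forall x, h (q x) = g x.
Proof.
move=> [hq [q_surj q_ker]] hg gI.
have g_q x y : q x = q y -> g x = g y.
  move=> e; apply/eqP; rewrite -subr_eq0 -(lsa_homB hg); apply/eqP/gI/q_ker.
  by rewrite (lsa_homB hq) e subrr.
have [s sK] := choice q_surj.
have g_s x u : q x = u -> g (s u) = g x by move=> <-; apply: g_q; rewrite sK.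
exists (g \o s); split=> [|x]; last exact: g_s.
split=> [c u v|]; first by rewrite /= -(lsa_homL hg); apply: g_s; rewrite (lsa_homL hq) !sK.
split=> [u v|b u].
  by rewrite /= -(lsa_hom_bracket hg); apply: g_s; rewrite (lsa_hom_bracket hq) !sK.
by move=> /(lsa_hom_par_lift hq q_surj) [x [hx <-]]; rewrite /= (g_s x) //; apply: lsa_hom_par.
Qed.

End Lifting.

Section CommutatorIdeal.
Variables (K : fieldType) (A : lieSuperAlg K) (J : A -> Prop).

Lemma lsa_hom_comm_span_center (B : lieSuperAlg K) (g : A -> B) (I : A -> Prop) x :
  lsa_hom g -> (forall r, J r -> center (g r)) -> comm_span I J x -> g x = 0.
Proof.
move=> hg gJ; move: x; apply: lsa_span_ind => [|_ [a [r [_ [Jr ->]]]]|c x y gx gy].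
- exact: lsa_hom0.
- by rewrite lsa_hom_bracket //; apply: (proj1 (centerP (g r)) (gJ r Jr)).
- by rewrite lsa_homL // gx gy scaler0 addr0.
Qed.

Lemma quotient_comm_span_center (Q : lieSuperAlg K) (q : A -> Q) r :
  lsa_quotient (comm_span (fun _ => True) J) q -> J r -> center (q r).
Proof.
move=> [hq [q_surj q_ker]] Jr; apply/centerP => u; have [a <-] := q_surj u.
by rewrite -lsa_hom_bracket //; apply/q_ker/lsa_span_mem; exists a, r.
Qed.

End CommutatorIdeal.

Section Subquotient.
Variables (K : fieldType) (A : lieSuperAlg K) (V : Type) (f : A -> V) (P : A -> Prop).
Local Notation "[ x , y ]" := (lsa_bracket x y).
Local Notation par := (@lsa_par K A).

Hypothesis P0 : P 0.
Hypothesis PL : forall c x y, P x -> P y -> P (c *: x + y).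
Hypothesis Pbracket : forall x y, P x -> P y -> P [x, y].
Hypothesis Pdecomp : forall x, P x ->
  exists x0 x1, [/\ P x0, P x1, par false x0, par true x1 & x = x0 + x1].
Hypothesis fL : forall c x y x' y', P x -> P y -> P x' -> P y' ->
  f x = f x' -> f y = f y' -> f (c *: x + y) = f (c *: x' + y').
Hypothesis fbracket : forall x y x' y', P x -> P y -> P x' -> P y' ->
  f x = f x' -> f y = f y' -> f [x, y] = f [x', y'].
Hypothesis fpar : forall x0 x1, P x0 -> P x1 -> par false x0 -> par true x1 ->
  f x0 = f x1 -> f x0 = f 0.

(* The image under [f] of the subalgebra [P]: a subalgebra of [A] when [f] is
   injective, a quotient of [A] when [P] is everything. *)
Definition subquo := {v : V | exists x, P x /\ v = f x}.
HB.instance Definition _ := gen_eqMixin subquo.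
HB.instance Definition _ := gen_choiceMixin subquo.

Definition represents (u : subquo) (x : A) := P x /\ sval u = f x.

Definition subquo_of x (Px : P x) : subquo := exist _ (f x) (ex_intro _ x (conj Px erefl)).

Lemma represents_of x (Px : P x) : represents (subquo_of Px) x.
Proof. by []. Qed.

Lemma represents_ex u : exists x, represents u x.
Proof. by case: u => v [x [Px e]]; exists x. Qed.

Lemma represents_uniq u v x : represents u x -> represents v x -> u = v.
Proof. by case: u v => [u pu] [v pv] [_ /= eu] [_ /= ev]; apply: eq_exist; rewrite eu ev. Qed.

Definition rep (u : subquo) : A := sval (cid (represents_ex u)).

Lemma repP u : represents u (rep u).
Proof. exact: svalP (cid (represents_ex u)). Qed.

Definition linS c u v : subquo := subquo_of (PL c (repP u).1 (repP v).1).
Definition bracketS u v : subquo := subquo_of (Pbracket (repP u).1 (repP v).1).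
Definition zeroS : subquo := subquo_of P0.
Definition addS u v := linS 1 u v.
Definition scaleS c u := linS c u zeroS.
Definition oppS u := scaleS (-1) u.

Lemma represents_linS c u v x y :
  represents u x -> represents v y -> represents (linS c u v) (c *: x + y).
Proof.
move=> [Px ux] [Py vy]; split; first exact: PL.
by apply: fL; rewrite -?(repP u).2 -?(repP v).2; try exact: (repP _).1.
Qed.

Lemma represents_bracketS u v x y :
  represents u x -> represents v y -> represents (bracketS u v) [x, y].
Proof.
move=> [Px ux] [Py vy]; split; first exact: Pbracket.
by apply: fbracket; rewrite -?(repP u).2 -?(repP v).2; try exact: (repP _).1.
Qed.

Lemma represents_addS u v x y :
  represents u x -> represents v y -> represents (addS u v) (x + y).
Proof. by move=> ux vy; have := represents_linS 1 ux vy; rewrite scale1r. Qed.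

Lemma represents_scaleS c u x : represents u x -> represents (scaleS c u) (c *: x).
Proof. by move=> ux; have := represents_linS c ux (represents_of P0); rewrite addr0. Qed.

Lemma represents_oppS u x : represents u x -> represents (oppS u) (- x).
Proof. by move=> ux; have := represents_scaleS (-1) ux; rewrite scaleN1r. Qed.

Lemma addSA : associative addS.
Proof.
move=> u v w; have [x ux] := represents_ex u; have [y vy] := represents_ex v.
have [z wz] := represents_ex w; apply: (@represents_uniq _ _ (x + y + z)).
  by rewrite -addrA; apply: represents_addS ux (represents_addS vy wz).
exact: represents_addS (represents_addS ux vy) wz.
Qed.

Lemma addSC : commutative addS.
Proof.
move=> u v; have [[x ux] [y vy]] := (represents_ex u, represents_ex v).
by apply: (@represents_uniq _ _ (x + y)); [|rewrite addrC]; apply: represents_addS.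
Qed.

Lemma add0S : left_id zeroS addS.
Proof.
move=> u; have [x ux] := represents_ex u; apply: (@represents_uniq _ _ x) => //.
by rewrite -[x]add0r; apply: represents_addS (represents_of P0) ux.
Qed.

Lemma addNS : left_inverse zeroS oppS addS.
Proof.
move=> u; have [x ux] := represents_ex u; apply: (@represents_uniq _ _ 0) => //.
by rewrite -(addNr x); apply: represents_addS (represents_oppS ux) ux.
Qed.

HB.instance Definition _ := GRing.isZmodule.Build subquo addSA addSC add0S addNS.

Lemma scaleSA a b u : scaleS a (scaleS b u) = scaleS (a * b) u.
Proof.
have [x ux] := represents_ex u; apply: (@represents_uniq _ _ (a *: (b *: x))).
  exact: represents_scaleS (represents_scaleS b ux).
by rewrite scalerA; apply: represents_scaleS.
Qed.

Lemma scale1S : left_id 1 scaleS.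
Proof.
move=> u; have [x ux] := represents_ex u; apply: (@represents_uniq _ _ x) => //.
by rewrite -[x]scale1r; apply: represents_scaleS.
Qed.

Lemma scaleSDr : right_distributive scaleS +%R.
Proof.
move=> c u v; have [[x ux] [y vy]] := (represents_ex u, represents_ex v).
apply: (@represents_uniq _ _ (c *: (x + y))).
  exact: represents_scaleS (represents_addS ux vy).
by rewrite scalerDr; apply: represents_addS; apply: represents_scaleS.
Qed.

Lemma scaleSDl u : {morph scaleS^~ u : a b / a + b}.
Proof.
move=> a b; have [x ux] := represents_ex u.
apply: (@represents_uniq _ _ ((a + b) *: x)); first exact: represents_scaleS.
by rewrite scalerDl; apply: represents_addS; apply: represents_scaleS.
Qed.

HB.instance Definition _ :=
  GRing.Zmodule_isLmodule.Build K subquo scaleSA scale1S scaleSDr scaleSDl.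

Definition parS b (u : subquo) := exists x, par b x /\ represents u x.

Lemma parS0 b : parS b 0.
Proof. by exists 0; split; [apply: lsa_par0 | apply: represents_of]. Qed.

Lemma parSD b u v : parS b u -> parS b v -> parS b (u + v).
Proof.
move=> [x [px ux]] [y [py vy]]; exists (x + y).
by split; [apply: lsa_parD | apply: represents_addS].
Qed.

Lemma parSZ b c u : parS b u -> parS b (c *: u).
Proof.
by move=> [x [px ux]]; exists (c *: x); split; [apply: lsa_parZ | apply: represents_scaleS].
Qed.

Lemma parS_decomp u : exists u0 u1, parS false u0 /\ parS true u1 /\ u = u0 + u1.
Proof.
have [x ux] := represents_ex u; have [x0 [x1 [Px0 Px1 p0 p1 ex]]] := Pdecomp ux.1.
exists (subquo_of Px0), (subquo_of Px1); split; first by exists x0.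
split; first by exists x1.
by apply: (@represents_uniq _ _ x) => //; rewrite ex; apply: represents_addS.
Qed.

Lemma parS_direct u : parS false u -> parS true u -> u = 0.
Proof.
move=> [x0 [p0 [Px0 u0]]] [x1 [p1 [Px1 u1]]]; apply: (@represents_uniq _ _ 0) => //.
by split=> //; rewrite u0; apply: (fpar Px0 Px1 p0 p1); rewrite -u0.
Qed.

Lemma bracketS_linl c u v w : bracketS (c *: u + v) w = c *: bracketS u w + bracketS v w.
Proof.
have [x ux] := represents_ex u; have [y vy] := represents_ex v; have [z wz] := represents_ex w.
apply: (@represents_uniq _ _ [c *: x + y, z]).
  exact: represents_bracketS (represents_addS (represents_scaleS c ux) vy) wz.
by rewrite lsa_linl; apply: represents_addS; [apply: represents_scaleS|];
  apply: represents_bracketS.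
Qed.

Lemma bracketS_linr c u v w : bracketS w (c *: u + v) = c *: bracketS w u + bracketS w v.
Proof.
have [x ux] := represents_ex u; have [y vy] := represents_ex v; have [z wz] := represents_ex w.
apply: (@represents_uniq _ _ [z, c *: x + y]).
  exact: represents_bracketS wz (represents_addS (represents_scaleS c ux) vy).
by rewrite lsa_linr; apply: represents_addS; [apply: represents_scaleS|];
  apply: represents_bracketS.
Qed.

Lemma parS_bracket a b u v : parS a u -> parS b v -> parS (a (+) b) (bracketS u v).
Proof.
move=> [x [px ux]] [y [py vy]]; exists [x, y].
by split; [apply: lsa_par_bracket | apply: represents_bracketS].
Qed.

Lemma bracketS_skew a b u v :
  parS a u -> parS b v -> bracketS u v = - (ksgn K a b *: bracketS v u).
Proof.
move=> [x [px ux]] [y [py vy]]; apply: (@represents_uniq _ _ [x, y]).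
  exact: represents_bracketS.
by rewrite (lsa_skew px py); apply/represents_oppS/represents_scaleS/represents_bracketS.
Qed.

Lemma bracketS_jacobi a b c u v w : parS a u -> parS b v -> parS c w ->
  ksgn K a c *: bracketS u (bracketS v w) + ksgn K b a *: bracketS v (bracketS w u)
  + ksgn K c b *: bracketS w (bracketS u v) = 0.
Proof.
move=> [x [px ux]] [y [py vy]] [z [pz wz]].
apply: (@represents_uniq _ _ 0); last exact: represents_of.
rewrite -(lsa_jacobi px py pz).
by do 2?apply: represents_addS; apply: represents_scaleS;
  do 2?apply: represents_bracketS.
Qed.

Definition subquo_lsa : lieSuperAlg K :=
  LieSuperAlg parS0 parSD parSZ parS_decomp parS_direct bracketS_linl bracketS_linr
    parS_bracket bracketS_skew bracketS_jacobi.

Lemma subquo_hom_to (C : lieSuperAlg K) (g : C -> subquo_lsa) (h : C -> A) :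
  lsa_hom h -> (forall z, represents (g z) (h z)) -> lsa_hom g.
Proof.
move=> hh gh; split=> [c z w|].
  apply: (@represents_uniq _ _ (h (c *: z + w))) => //.
  by rewrite (lsa_homL hh); apply: represents_addS (represents_scaleS c (gh z)) (gh w).
split=> [z w|b z pz]; last by exists (h z); split; [apply: lsa_hom_par | apply: gh].
apply: (@represents_uniq _ _ (h [z, w])) => //.
by rewrite (lsa_hom_bracket hh); apply: represents_bracketS.
Qed.

Lemma subquo_hom_from (C : lieSuperAlg K) (g : subquo_lsa -> C) (h : A -> C) :
  lsa_hom h -> (forall u x, represents u x -> g u = h x) -> lsa_hom g.
Proof.
move=> hh gh; split=> [c u v|].
  have [[x ux] [y vy]] := (represents_ex u, represents_ex v).
  rewrite (gh _ _ ux) (gh _ _ vy) -(lsa_homL hh); apply: gh.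
  exact: represents_addS (represents_scaleS c ux) vy.
split=> [u v|b u [x [px ux]]]; last by rewrite (gh _ _ ux); apply: lsa_hom_par.
have [[x ux] [y vy]] := (represents_ex u, represents_ex v).
by rewrite (gh _ _ ux) (gh _ _ vy) -(lsa_hom_bracket hh); apply/gh/represents_bracketS.
Qed.

End Subquotient.

Section CentralQuotient.
Variables (K : fieldType) (B : lieSuperAlg K).
Implicit Types (x y : B).
Local Notation "[ x , y ]" := (lsa_bracket x y).

Definition ad x : B -> B := lsa_bracket x.

Lemma ad_eqP x y : ad x = ad y <-> center (x - y).
Proof.
split=> [e z | zxy]; first by rewrite bracketBl -/(ad x z) e subrr.
by apply: funext => z; apply/eqP; rewrite -subr_eq0 -bracketBl zxy.
Qed.

Let decomp_true x : True -> exists x0 x1,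
  [/\ True, True, lsa_par false x0, lsa_par true x1 & x = x0 + x1].
Proof. by move=> _; have [x0 [x1 [h0 [h1 ->]]]] := lsa_decomp x; exists x0, x1. Qed.

Let ad_lin c x y x' y' : True -> True -> True -> True ->
  ad x = ad x' -> ad y = ad y' -> ad (c *: x + y) = ad (c *: x' + y').
Proof. by move=> _ _ _ _ ex ey; apply: funext => z; rewrite /ad !lsa_linl -!/(ad _ z) ex ey. Qed.

Let ad_bracket x y x' y' : True -> True -> True -> True ->
  ad x = ad x' -> ad y = ad y' -> ad [x, y] = ad [x', y'].
Proof. by move=> _ _ _ _ /ad_eqP zx /ad_eqP zy; rewrite (bracket_center_eq zx zy). Qed.

Let ad_par x0 x1 : True -> True -> lsa_par false x0 -> lsa_par true x1 ->
  ad x0 = ad x1 -> ad x0 = ad 0.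
Proof.
move=> _ _ p0 p1 e; apply: funext; apply: lsa_homog_ind => [z w ez ew | b z pz].
  by rewrite /ad !bracketDr -/(ad x0 z) -/(ad x0 w) ez ew.
rewrite /ad bracket0l; apply: (lsa_par_both_eq0 (lsa_par_bracket p0 pz)).
by rewrite -/(ad x0 z) e; apply: lsa_par_bracket p1 pz.
Qed.

Definition center_quo : lieSuperAlg K :=
  subquo_lsa I (fun _ _ _ _ _ => I) (fun _ _ _ _ => I) decomp_true ad_lin ad_bracket ad_par.

Definition center_proj x : center_quo := subquo_of ad (I : (fun _ => True) x).

Lemma center_proj_eqP x y : center_proj x = center_proj y <-> center (x - y).
Proof.
rewrite -ad_eqP; split=> [/(congr1 sval) // | e].
by apply: (@represents_uniq _ _ _ _ _ _ _ x) => //; split.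
Qed.

Lemma center_proj_quotient : lsa_quotient (@center K B) center_proj.
Proof.
split; first exact: (subquo_hom_to (h := id)).
split=> [u | x]; first by have [x [_ ux]] := represents_ex u; exists x; apply: represents_uniq.
have -> : 0 = center_proj 0 by [].
by rewrite center_proj_eqP subr0.
Qed.

End CentralQuotient.

Section IsoclinismFromHom.
Variables (K : fieldType) (A B : lieSuperAlg K) (g : A -> B).
Hypothesis hg : lsa_hom g.
Hypothesis g_inj : forall y, derived y -> g y = 0 -> y = 0.
Hypothesis g_center : forall t, exists y, center (t - g y).
Local Notation "[ x , y ]" := (lsa_bracket x y).

Lemma center_hom y : center (g y) <-> center y.
Proof.
split=> [zgy y' | zy t].
  by apply: g_inj; [apply: derived_bracket | rewrite lsa_hom_bracket // zgy].
have [y' zt] := g_center t; have zgy : center (g y - g y) by rewrite subrr; apply: center0.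
by rewrite (bracket_center_eq zgy zt) -lsa_hom_bracket // zy lsa_hom0.
Qed.

Lemma derived_hom_image t : derived t -> exists y, derived y /\ g y = t.
Proof.
move: t; apply: derived_ind => [|t1 t2|c t1 t2 [y1 [d1 <-]] [y2 [d2 <-]]].
- by exists 0; split; [apply: lsa_span0 | apply: lsa_hom0].
- have [[y1 z1] [y2 z2]] := (g_center t1, g_center t2).
  exists [y1, y2]; split; first exact: derived_bracket.
  by rewrite lsa_hom_bracket //; apply/esym/bracket_center_eq.
- by exists (c *: y1 + y2); split; [apply: lsa_spanL | apply: lsa_homL].
Qed.

Section Inverse.
Variable theta : B -> A.
Hypothesis thetaK : forall y, derived y -> theta (g y) = y.

Lemma derived_iso_inverse : derived_iso theta.
Proof.
have gK t : derived t -> exists2 y, derived y & t = g y.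
  by move=> /derived_hom_image [y [dy <-]]; exists y.
split=> [c _ _ /gK [y1 d1 ->] /gK [y2 d2 ->] | ].
  by rewrite -lsa_homL // !thetaK //; apply: lsa_spanL.
split=> [_ _ /gK [y1 d1 ->] /gK [y2 d2 ->] | ].
  by rewrite -lsa_hom_bracket // !thetaK //; apply: derived_bracket.
split=> [b _ /gK [y dy ->] pb | ].
  rewrite thetaK //; have [y0 [y1 [d0 d1 p0 p1 ey]]] := derived_decomp dy.
  have [g0 g1] := (lsa_hom_par hg p0, lsa_hom_par hg p1).
  rewrite ey lsa_homD // in pb *; case: b pb => pb.
    have [/g_inj -> //] := lsa_decomp_uniq g0 g1 (lsa_par0 _ _) pb (esym (add0r _)).
    by rewrite add0r.
  have [_ /g_inj -> //] := lsa_decomp_uniq g0 g1 pb (lsa_par0 _ _) (esym (addr0 _)).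
  by rewrite addr0.
split=> [_ /gK [y dy ->] | ]; first by rewrite thetaK.
split=> [_ _ /gK [y1 d1 ->] /gK [y2 d2 ->] | y dy]; first by rewrite !thetaK // => ->.
by exists (g y); split; [apply: lsa_hom_derived | apply: thetaK].
Qed.

End Inverse.

Lemma isoclinic_of_hom : isoclinic B A.
Proof.
have /choice [theta thetaP] t : exists y, derived t -> derived y /\ g y = t.
  case: (pselect (derived t)) => [/derived_hom_image [y hy] | nd]; first by exists y.
  by exists 0.
have thetaK y : derived y -> theta (g y) = y.
  move=> dy; have [dty gty] := thetaP _ (lsa_hom_derived hg dy).
  apply/eqP; rewrite -subr_eq0; apply/eqP/g_inj; first exact: lsa_spanB.
  by rewrite lsa_homB // gty subrr.
have [hq [q_surj q_ker]] := center_proj_quotient B.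
exists (center_quo B), (fun t => center_proj t), (center_quo B), (fun y => center_proj (g y)).
exists id, theta.
split; first exact: center_proj_quotient.
split.
  split; first exact: lsa_hom_comp.
  split=> [u | y]; last by rewrite /= q_ker center_hom.
  have [t <-] := q_surj u; have [y zy] := g_center t.
  by exists y; apply/center_proj_eqP/center_subC.
split; first by split; [apply: lsa_hom_id | exists id].
split; first exact: derived_iso_inverse.
move=> a b c d /center_proj_eqP/center_subC zc /center_proj_eqP/center_subC zd.
by rewrite (bracket_center_eq (x' := g c) (y' := g d)) // -lsa_hom_bracket // thetaK //;
  apply: derived_bracket.
Qed.

End IsoclinismFromHom.

Section SpanningModulo.
Variables (K : fieldType) (V : lmodType K) (W : V -> Prop).
Hypothesis WL : forall c x y, W x -> W y -> W (c *: x + y).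

Definition spans_mod m (v : 'I_m -> V) :=
  forall x, exists c : 'I_m -> K, W (x - \sum_(i < m) c i *: v i).

Lemma spans_mod_drop m (v : 'I_m.+1 -> V) (c : 'I_m.+1 -> K) j :
  spans_mod v -> W (\sum_(i < m.+1) c i *: v i) -> c j != 0 ->
  spans_mod (fun i => v (lift j i)).
Proof.
move=> span_v Wc cj x; have [d Wd] := span_v x; pose r := d j / c j.
exists (fun i => d (lift j i) - r * c (lift j i)).
suff -> : x - \sum_(i < m) (d (lift j i) - r * c (lift j i)) *: v (lift j i) =
    r *: \sum_(i < m.+1) c i *: v i + (x - \sum_(i < m.+1) d i *: v i) by apply: WL.
have -> : \sum_(i < m) (d (lift j i) - r * c (lift j i)) *: v (lift j i) =
    \sum_(i < m) d (lift j i) *: v (lift j i) - r *: \sum_(i < m) c (lift j i) *: v (lift j i).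
  by rewrite scaler_sumr -sumrB; apply: eq_bigr => i _; rewrite scalerBl scalerA.
rewrite !(bigD1_ord j) //= scalerDr scalerA divfK // opprB opprD [RHS]addrCA.
by rewrite addrACA subrr add0r.
Qed.

End SpanningModulo.

Section HomogeneousBasis.
Variables (K : fieldType) (Q L : lieSuperAlg K) (mu : Q -> L).
Hypotheses (hmu : lsa_hom mu) (mu_surj : forall l, exists y, mu y = l).
Hypothesis L_findim : lsa_findim L.

Definition homog_spanning m (e : 'I_m -> Q) :=
  exists p : 'I_m -> bool, (forall j, lsa_par (p j) (e j)) /\
    spans_mod (@derived K L) (fun j => mu (e j)).

Lemma homog_spanning_exists : exists m (e : 'I_m -> Q), homog_spanning e.
Proof.
have [n [v span_v]] := L_findim.
have /choice [e0 e0P] i :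
    exists y0, lsa_par false y0 /\ exists y1, lsa_par true y1 /\ v i = mu y0 + mu y1.
  have [x0 [x1 [h0 [h1 ->]]]] := lsa_decomp (v i).
  have [y0 [p0 <-]] := lsa_hom_par_lift hmu mu_surj h0.
  have [y1 [p1 <-]] := lsa_hom_par_lift hmu mu_surj h1.
  by exists y0; split => //; exists y1.
have /choice [e1 e1P] i := (e0P i).2.
pose e k := match split k with inl i => e0 i | inr i => e1 i end.
pose p (k : 'I_(n + n)) := if split k is inr _ then true else false.
exists (n + n)%N, e, p; split=> [k | l].
  by rewrite /e /p; case: (split k) => i; [apply: (e0P i).1 | apply: (e1P i).1].
have [c ->] := lsa_span_range (span_v l).
exists (fun k => match split k with inl i => c i | inr i => c i end).
set s := \sum_(k < n + n) _; suff -> : s = \sum_(i < n) c i *: v i.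
  by rewrite subrr; apply: lsa_span0.
rewrite /s big_split_ord /= -big_split; apply: eq_bigr => i _.
have [El Er] : split (lshift n i) = inl i /\ split (rshift n i) = inr i.
  by split; apply: (unsplitK (inl i)) || apply: (unsplitK (inr i)).
by rewrite /e El Er /= -scalerDr -(e1P i).2.
Qed.

(* A spanning family of minimal size is independent modulo [L']. *)
Lemma homog_basis_exists : exists m (e : 'I_m -> Q), homog_spanning e /\
  forall c : 'I_m -> K, derived (\sum_(j < m) c j *: mu (e j)) -> forall j, c j = 0.
Proof.
have exS : exists m, `[< exists e : 'I_m -> Q, homog_spanning e >].
  by have [m [e he]] := homog_spanning_exists; exists m; apply/asboolP; exists e.
case: (ex_minnP exS) => m /asboolP [e [p [he span_e]]] min_m.
exists m, e; split; first by exists p.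
move=> c dc j; apply/eqP/contraT => cj; have := min_m.
case: m e p he span_e c dc j cj {min_m} => [_ _ _ _ _ _ [] //|m e p he span_e c dc j cj].
suff /asboolP /[swap] /[apply] : exists e' : 'I_m -> Q, homog_spanning e' by rewrite ltnn.
exists (fun i => e (lift j i)), (fun i => p (lift j i)); split=> [i|]; first exact: he.
exact: (spans_mod_drop (@lsa_spanL _ _ _) span_e dc cj).
Qed.

End HomogeneousBasis.

Section CentralExtension.
Variables (K : fieldType) (L T Q : lieSuperAlg K) (lam : T -> L) (mu : Q -> L) (beta : Q -> T).
Hypothesis hT : universal_CL lam.
Hypotheses (hmu : lsa_hom mu) (mu_surj : forall l, exists y, mu y = l).
Hypothesis mu_ker : forall y, mu y = 0 -> center y.
Hypotheses (hbeta : lsa_hom beta) (beta_lam : forall y, lam (beta y) = mu y).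
Local Notation "[ x , y ]" := (lsa_bracket x y).

Section StemSubalgebra.
Variables (m : nat) (e : 'I_m -> Q) (p : 'I_m -> bool).
Hypothesis e_par : forall j, lsa_par (p j) (e j).
Hypothesis e_span : spans_mod (@derived K L) (fun j => mu (e j)).
Hypothesis e_indep :
  forall c : 'I_m -> K, derived (\sum_(j < m) c j *: mu (e j)) -> forall j, c j = 0.

Definition in_stem (y : Q) :=
  exists d (c : 'I_m -> K), derived d /\ y = d + \sum_(j < m) c j *: e j.

Lemma in_stem_derived d : derived d -> in_stem d.
Proof.
by exists d, (fun _ => 0); split; rewrite // big1 ?addr0 // => j _; rewrite scale0r.
Qed.

Lemma in_stem0 : in_stem 0.
Proof. exact/in_stem_derived/lsa_span0. Qed.

Lemma in_stemL c x y : in_stem x -> in_stem y -> in_stem (c *: x + y).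
Proof.
move=> [d1 [c1 [d1D ->]]] [d2 [c2 [d2D ->]]].
exists (c *: d1 + d2), (fun j => c * c1 j + c2 j); split; first exact: lsa_spanL.
rewrite scalerDr addrACA scaler_sumr -big_split; congr (_ + _).
by apply: eq_bigr => j _; rewrite scalerDl scalerA.
Qed.

Lemma in_stem_bracket x y : in_stem x -> in_stem y -> in_stem [x, y].
Proof. by move=> _ _; apply/in_stem_derived/derived_bracket. Qed.

Lemma in_stem_decomp y : in_stem y ->
  exists y0 y1, [/\ in_stem y0, in_stem y1, lsa_par false y0, lsa_par true y1 & y = y0 + y1].
Proof.
move=> [d [c [dD ->]]]; have [d0 [d1 [d0D d1D p0 p1 ->]]] := derived_decomp dD.
pose c_ b j := if p j == b then c j else 0.
have par_c b : lsa_par b (\sum_(j < m) c_ b j *: e j).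
  apply: lsa_par_sum => j; rewrite /c_; case: eqP => [<-|_]; first exact: lsa_parZ.
  by rewrite scale0r; apply: lsa_par0.
exists (d0 + \sum_(j < m) c_ false j *: e j), (d1 + \sum_(j < m) c_ true j *: e j).
split; try by [exists d0, (c_ false) | exists d1, (c_ true) | apply: lsa_parD].
rewrite addrACA -big_split; congr (_ + _); apply: eq_bigr => j _.
by rewrite /c_; case: (p j); rewrite /= scale0r ?addr0 ?add0r.
Qed.

Let id_lin c (x y x' y' : Q) : in_stem x -> in_stem y -> in_stem x' -> in_stem y' ->
  x = x' -> y = y' -> c *: x + y = c *: x' + y'.
Proof. by move=> _ _ _ _ -> ->. Qed.

Let id_bracket (x y x' y' : Q) : in_stem x -> in_stem y -> in_stem x' -> in_stem y' ->
  x = x' -> y = y' -> [x, y] = [x', y'].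
Proof. by move=> _ _ _ _ -> ->. Qed.

Let id_par (x0 x1 : Q) : in_stem x0 -> in_stem x1 -> lsa_par false x0 -> lsa_par true x1 ->
  x0 = x1 -> x0 = 0.
Proof. by move=> _ _ p0 p1 e01; apply: lsa_direct; rewrite // e01. Qed.

Definition stem : lieSuperAlg K :=
  subquo_lsa in_stem0 in_stemL in_stem_bracket in_stem_decomp id_lin id_bracket id_par.

Definition stem_val (u : stem) : Q := sval u.

Lemma stem_val_hom : lsa_hom stem_val.
Proof. by apply: (subquo_hom_from (h := id)) => // u x []. Qed.

Lemma stem_val_inj : injective stem_val.
Proof.
move=> u v uv; have [x [Sx ux]] := represents_ex u.
by apply: (@represents_uniq _ _ _ _ _ _ _ x) => //; split; rewrite // -ux.
Qed.

Lemma stem_val_in x : in_stem x -> exists u, stem_val u = x.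
Proof. by move=> Sx; exists (subquo_of id Sx). Qed.

Definition lam_stem (u : stem) : L := mu (stem_val u).

Lemma lam_stem_surj l : exists u, lam_stem u = l.
Proof.
have [c dl] := e_span l; have [d [dD mud]] := lsa_hom_derived_lift hmu mu_surj dl.
have [u ud] : exists u, stem_val u = d + \sum_(j < m) c j *: e j by apply: stem_val_in; exists d, c.
by exists u; rewrite /lam_stem ud lsa_homD // mud (lsa_hom_sum hmu) subrK.
Qed.

(* Brackets in [Q] only depend on the arguments modulo the central kernel of [mu],
   and [stem] meets every coset of that kernel. *)
Lemma derived_stem y : derived y -> exists u, derived u /\ stem_val u = y.
Proof.
move: y; apply: derived_ind => [|x y|c x y [u [uD <-]] [v [vD <-]]].
- by exists 0; split; [apply: lsa_span0 | apply: lsa_hom0 stem_val_hom].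
- have [[u ux] [v vy]] := (lam_stem_surj (mu x), lam_stem_surj (mu y)).
  exists [u, v]; split; first exact: derived_bracket.
  rewrite lsa_hom_bracket; last exact: stem_val_hom.
  by apply: bracket_center_eq; apply: mu_ker; rewrite lsa_homB // -/(lam_stem _) ?ux ?vy subrr.
- exists (c *: u + v); split; first exact: lsa_spanL.
  exact: lsa_homL stem_val_hom _ _ _.
Qed.

Lemma lam_stem_ker u : lam_stem u = 0 -> derived u /\ center u.
Proof.
move=> lu; split; last first.
  move=> v; apply: stem_val_inj; rewrite lsa_hom_bracket; last exact: stem_val_hom.
  by rewrite mu_ker // (lsa_hom0 stem_val_hom).
have [x [Sx ux]] := represents_ex u; have [d [c [dD xE]]] := Sx.
have c0 : forall j, c j = 0.
  apply: e_indep; rewrite -(lsa_hom_sum hmu).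
  have -> : \sum_(j < m) c j *: e j = x - d by rewrite xE addrC addKr.
  rewrite lsa_homB // -ux -/(lam_stem u) lu sub0r -scaleN1r.
  by apply: lsa_spanZ; apply: lsa_hom_derived.
have [v [vD vd]] := derived_stem dD; suff -> : u = v by [].
apply: stem_val_inj; rewrite vd /stem_val ux xE big1 ?addr0 // => j _.
by rewrite c0 scale0r.
Qed.

Lemma inCL_lam_stem : inCL lam_stem.
Proof.
split; first exact: lsa_hom_comp stem_val_hom hmu.
by split; [apply: lam_stem_surj | apply: lam_stem_ker].
Qed.

Lemma beta_inj_derived_stem y : derived y -> beta y = 0 -> y = 0.
Proof.
have [tau [htau tau_lam]] := hT.2 _ _ inCL_lam_stem.
pose h y := stem_val (tau (beta y)).
have hh : lsa_hom h by apply/lsa_hom_comp/stem_val_hom/lsa_hom_comp.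
have hy_y x : center (x - h x).
  by apply: mu_ker; rewrite lsa_homB // -/(lam_stem _) tau_lam beta_lam subrr.
move=> yD by0; rewrite (lsa_hom_eq_on_derived (lsa_hom_id Q) hh hy_y yD) /h /= by0.
by rewrite (lsa_hom0 htau) (lsa_hom0 stem_val_hom).
Qed.

End StemSubalgebra.

Lemma beta_inj_derived : lsa_findim L -> forall y, derived y -> beta y = 0 -> y = 0.
Proof.
move=> L_findim.
have [m [e [[p [e_par e_span]] e_indep]]] := homog_basis_exists hmu mu_surj L_findim.
exact: beta_inj_derived_stem e_par e_span e_indep.
Qed.

End CentralExtension.

Theorem theorem4p5 (K : fieldType)
  (hK2 : 2%:R != 0 :> K) (hK3 : 3%:R != 0 :> K)
  (L : lieSuperAlg K) (hL : lsa_findim L)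
  (X : Type) (deg : X -> bool) (F : lieSuperAlg K) (iota : X -> F)
  (hF : lsa_free deg iota)
  (pi : F -> L) (hpi : lsa_hom pi) (hpis : forall y, exists x, pi x = y)
  (T : lieSuperAlg K) (lam : T -> L) (hT : universal_CL lam)
  (Q : lieSuperAlg K) (q : F -> Q)
  (hq : lsa_quotient (comm_span (fun _ : F => True) (fun r => pi r = 0)) q) :
  isoclinic T Q.
Proof.
have [hlam [lam_surj lam_ker]] := hT.1.
have [b [hb b_lam]] := lsa_free_lift hF hpi hlam lam_surj.
have b_R r : pi r = 0 -> center (b r) by rewrite -b_lam => /lam_ker [].
have [beta [hbeta beta_q]] := lsa_quotient_factor hq hb (fun x => lsa_hom_comm_span_center hb b_R).
have mu_q x : lam (beta (q x)) = pi x by rewrite beta_q b_lam.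
have mu_surj l : exists y, lam (beta y) = l by have [x <-] := hpis l; exists (q x).
have mu_ker y : lam (beta y) = 0 -> center y.
  by have [x <-] := hq.2.1 y; rewrite mu_q; apply: quotient_comm_span_center hq.
have beta_center t : exists y, center (t - beta y).
  have [x pix] := hpis (lam t); exists (q x).
  by suff /lam_ker [] : lam (t - beta (q x)) = 0 by []; rewrite lsa_homB // mu_q pix subrr.
have beta_inj := beta_inj_derived hT (lsa_hom_comp hbeta hlam) mu_surj mu_ker hbeta
  (fun _ => erefl) hL.
exact: isoclinic_of_hom hbeta beta_inj beta_center.
Qed.
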